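(* There exists a locally finite poset $P$ with a minimum element such that: (a) $P$ has the Möbius nonvanishing property: for every $x\in P$, the set $\{y\in P : \mu_P(x,y)\neq 0\}$ is infinite; and (b) $P$ does not have property $\mathcal{H}_2$: there is a two-element subset $S\subset P$ such that for each $z\in S$ there are only finitely many $x\in P$ with $x\geqslant z$ and $x\not\geqslant y$ for the other element $y\in S\setminus\{z\}$. In particular, $P$ has the Möbius nonvanishing property but does not have the Möbius uncertainty property, i.e. there exist functions $f,g:P\to\mathbb{C}$, neither identically zero, with $g(z)=\sum_{x\leqslant z}f(x)$ for all $z\in P$ and both $\{x: f(x)\neq 0\}$ and $\{x:g(x)\neq0\}$ finite.
   Context: A poset is locally finite if every interval $[x,y]=\{z: x\leqslant z\leqslant y\}$ is finite. The Möbius function $\mu_P$ of $P$ is defined on pairs $x,y\in P$ by $\mu_P(x,y)=1$ if $x=y$, $\mu_P(x,y)=-\sum_{x\leqslant z<y}\mu_P(x,z)$ if $x<y$, and $\mu_P(x,y)=0$ if $x\not\leqslant y$. *)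

From HB Require Import structures.
From mathcomp Require Import all_boot all_order all_algebra.
From mathcomp Require Import complex Rstruct.
Set Implicit Arguments. Unset Strict Implicit. Unset Printing Implicit Defensive.
Import Order.TTheory GRing.Theory Num.Theory.
Local Open Scope order_scope.

Notation Cx := (Rdefinitions.R[i]).

Definition fin_set (T : Type) (A : T -> Prop) : Prop :=
  exists s : seq T, forall z, A z -> List.In z s.

Definition enumerates (T : eqType) (s : seq T) (A : T -> Prop) : Prop :=
  uniq s /\ forall z, (z \in s) <-> A z.

Definition locally_finite (d : Order.disp_t) (T : porderType d) : Prop :=
  forall x y : T, fin_set (fun z => x <= z <= y).

Definition has_minimum (d : Order.disp_t) (T : porderType d) : Prop :=
  exists m : T, forall x : T, m <= x.

(* The (finite, by local finiteness) sum is taken along any duplicate-free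
   enumeration of the half-open interval [x,y). *)
Definition is_mobius (d : Order.disp_t) (T : porderType d) (mu : T -> T -> int) : Prop :=
  (forall x : T, mu x x = 1%R) /\
  (forall x y : T, x < y -> forall s : seq T, enumerates s (fun z => x <= z < y) ->
       mu x y = (- \sum_(z <- s) mu x z)%R) /\
  (forall x y : T, ~~ (x <= y) -> mu x y = 0%R).

Definition mobius_nonvanishing (d : Order.disp_t) (T : porderType d) (mu : T -> T -> int) : Prop :=
  forall x : T, ~ fin_set (fun y => mu x y != 0%R).

Definition not_H2 (d : Order.disp_t) (T : porderType d) : Prop :=
  exists a b : T, a != b /\
    fin_set (fun x => a <= x /\ ~~ (b <= x)) /\
    fin_set (fun x => b <= x /\ ~~ (a <= x)).

Definition not_mobius_uncertainty (d : Order.disp_t) (T : porderType d) : Prop :=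
  exists f g : T -> Cx,
    (exists x, f x != 0%R) /\ (exists x, g x != 0%R) /\
    (forall z : T, forall s : seq T, enumerates s (fun x => x <= z) ->
        g z = (\sum_(x <- s) f x)%R) /\
    fin_set (fun x => f x != 0%R) /\ fin_set (fun x => g x != 0%R).

(* The example is the poset 0 < {1,2} < {3,4} < ... : a minimum followed by
   infinitely many two-element antichains, each lying entirely below the next.
   Between x and y every intermediate level contributes two equal Möbius values,
   so the recursion gives mu(x,y) = (-1)^(level y - level x) as soon as
   level x < level y; in particular mu(x,_) never vanishes on the infinitely many
   higher levels.  On the other hand the two atoms 1 and 2 lie below exactly the
   same elements besides themselves, so H_2 fails.  For any such pair {a,b},
   f = delta_a - delta_b has the zeta transform g = [a <= _] - [b <= _], and the
   support of g is exactly the union of the two finite sets witnessing the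
   failure of H_2: both f and g are finitely supported. *)
From HB Require Import structures.
From mathcomp Require Import all_boot all_order all_algebra.
From mathcomp Require Import complex Rstruct zify.
Set Implicit Arguments. Unset Strict Implicit. Unset Printing Implicit Defensive.
Import Order.TTheory GRing.Theory Num.Theory.
Local Open Scope order_scope.

Lemma InP (T : eqType) (x : T) (s : seq T) : reflect (List.In x s) (x \in s).
Proof.
elim: s => [|y s IH] /=; first by right.
rewrite in_cons; apply: (iffP orP) => [[/eqP->|/IH]|[->|/IH]]; by [left|right|left|right].
Qed.

Lemma fin_set_sub (T : Type) (A B : T -> Prop) :
  (forall z, A z -> B z) -> fin_set B -> fin_set A.
Proof. by move=> AB [s hs]; exists s => z /AB /hs. Qed.

Lemma fin_setU (T : Type) (A B : T -> Prop) :
  fin_set A -> fin_set B -> fin_set (fun z => A z \/ B z).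
Proof.
move=> [s hs] [t ht]; exists (s ++ t) => z hz; apply/List.in_app_iff.
by case: hz => [/hs|/ht]; [left|right].
Qed.

Lemma fin_set_mem (T : eqType) (s : seq T) : fin_set (fun z => z \in s).
Proof. by exists s => z /InP. Qed.

Lemma fin_set_leq (n : nat) : fin_set (fun z => (z <= n)%N).
Proof. by apply: fin_set_sub (fin_set_mem (iota 0 n.+1)) => z; rewrite mem_iota. Qed.

Lemma fin_set_nat_bounded (A : nat -> Prop) :
  fin_set A -> exists m, forall z, A z -> (z <= m)%N.
Proof.
move=> [s hs]; exists (\max_(z <- s) z)%N => z /hs /InP zs.
exact: (leq_bigmax_seq (F := id) _ zs).
Qed.

Lemma enumerates_perm (T : eqType) (s t : seq T) (A : T -> Prop) :
  enumerates s A -> enumerates t A -> perm_eq s t.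
Proof.
move=> [us hs] [ut ht]; apply: uniq_perm => // z.
by apply/idP/idP => h; [apply/ht/hs | apply/hs/ht].
Qed.

Lemma sum_indicator (R : nzSemiRingType) (T : eqType) (s : seq T) (a : T) :
  uniq s -> (\sum_(x <- s) (x == a)%:R = (a \in s)%:R :> R)%R.
Proof.
by move=> us; rewrite -natr_sum -count_uniq_mem // -sum1_count [in RHS]big_mkcond.
Qed.

Section MobiusUniqueness.

Variables (disp : Order.disp_t) (T : porderType disp).
Hypothesis lfT : locally_finite T.

Lemma locally_finite_interval_enum (x y : T) :
  exists s, enumerates s (fun z => x <= z < y).
Proof.
have [s hs] := lfT x y.
exists (undup [seq z <- s | x <= z < y]); split; first exact: undup_uniq.
move=> z; rewrite mem_undup mem_filter; split=> [/andP[]//|hz].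
rewrite hz; case/andP: hz => le_xz /ltW le_zy.
by apply/InP/hs; rewrite le_xz le_zy.
Qed.

Variable rank : T -> nat.
Hypothesis rank_lt : forall x y : T, x < y -> (rank x < rank y)%N.

Lemma is_mobius_uniq (mu1 mu2 : T -> T -> int) :
  is_mobius mu1 -> is_mobius mu2 -> forall x y, mu1 x y = mu2 x y.
Proof.
move=> [one1 [rec1 off1]] [one2 [rec2 off2]] x y.
have [n] := ubnP (rank y); elim: n y => // n IH y /ltnSE le_yn.
have [<-|nxy] := eqVneq x y; first by rewrite one1 one2.
have [le_xy|nle_xy] := boolP (x <= y); last by rewrite off1 ?off2.
have lt_xy : x < y by rewrite lt_neqAle nxy.
have [s hs] := locally_finite_interval_enum x y.
rewrite (rec1 _ _ lt_xy _ hs) (rec2 _ _ lt_xy _ hs); congr (- _)%R.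
apply: eq_big_seq => z /(proj2 hs z) /andP[_ lt_zy]; apply: IH.
exact: leq_trans (rank_lt lt_zy) le_yn.
Qed.

End MobiusUniqueness.

Lemma not_H2_not_mobius_uncertainty (disp : Order.disp_t) (T : porderType disp) :
  not_H2 T -> not_mobius_uncertainty T.
Proof.
move=> [a [b [neq_ab [fin_a fin_b]]]].
pose f x : Cx := ((x == a)%:R - (x == b)%:R)%R.
pose g z : Cx := ((a <= z)%O%:R - (b <= z)%O%:R)%R.
exists f, g; split.
  by exists a; rewrite /f eqxx (negPf neq_ab) subr0 oner_neq0.
split.
  have [le_ba|nle_ba] := boolP (b <= a); last first.
    by exists a; rewrite /g lexx (negPf nle_ba) subr0 oner_neq0.
  have nle_ab : ~~ (a <= b) by apply: contra neq_ab => le_ab; rewrite eq_le le_ab.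
  by exists b; rewrite /g lexx (negPf nle_ab) sub0r oppr_eq0 oner_neq0.
split.
  move=> z s [us hs]; rewrite /f sumrB !sum_indicator //.
  have mem_s x : (x \in s) = (x <= z) by apply/idP/idP => /hs.
  by rewrite !mem_s.
split.
  apply: fin_set_sub (fin_set_mem [:: a; b]) => x; rewrite /f !inE.
  by apply: contraR => /norP[/negPf-> /negPf->]; rewrite subrr.
apply: fin_set_sub (fin_setU fin_a fin_b) => z; rewrite /g.
by case: (a <= z); case: (b <= z); rewrite ?subrr ?eqxx; auto.
Qed.

(* The carrier is nat, the level of n is uphalf n, i.e. level 0 = {0} and
   level k = {2k-1, 2k} for k > 0; x < y iff level x < level y. *)
Definition twin_chain : Type := nat.
HB.instance Definition _ := Choice.on twin_chain.

Definition level (x : twin_chain) : nat := uphalf x.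
Definition twin_le (x y : twin_chain) : bool := (x == y) || (level x < level y)%N.

Lemma twin_le_refl : reflexive twin_le.
Proof. by move=> x; rewrite /twin_le eqxx. Qed.

Lemma twin_le_anti : antisymmetric twin_le.
Proof.
move=> x y; rewrite /twin_le => /andP[/orP[/eqP//|lt_xy] /orP[/eqP//|lt_yx]].
by move: (ltn_trans lt_xy lt_yx); rewrite ltnn.
Qed.

Lemma twin_le_trans : transitive twin_le.
Proof.
move=> y x z; rewrite /twin_le => /orP[/eqP->//|lt_xy] /orP[/eqP<-|lt_yz].
  by rewrite lt_xy orbT.
by rewrite (ltn_trans lt_xy lt_yz) orbT.
Qed.

Fact twin_disp : Order.disp_t. Proof. exact: Order.Disp tt tt. Qed.
HB.instance Definition _ :=
  Order.Le_isPOrder.Build twin_disp twin_chain twin_le_refl twin_le_anti twin_le_trans.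

Lemma twin_leE (x y : twin_chain) : (x <= y) = (x == y) || (level x < level y)%N.
Proof. by []. Qed.

Lemma twin_ltE (x y : twin_chain) : (x < y) = (level x < level y)%N.
Proof. by rewrite lt_def twin_leE; have [->|] := eqVneq x y; rewrite ?ltnn. Qed.

Lemma twin_le_leq (x y : twin_chain) : x <= y -> (x <= y)%N.
Proof. by rewrite twin_leE /level => /orP[/eqP->|]; lia. Qed.

Lemma twin_chain_locally_finite : locally_finite twin_chain.
Proof.
move=> x y; apply: fin_set_sub (fin_set_leq y) => z /andP[_].
exact: twin_le_leq.
Qed.

Lemma twin_chain_has_minimum : has_minimum twin_chain.
Proof. by exists (0 : twin_chain) => x; rewrite twin_leE /level; case: x. Qed.

Lemma twin_up_level (a b x : twin_chain) :
  level a = level b -> a <= x -> ~~ (b <= x) -> x = a.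
Proof. by rewrite !twin_leE => <- /orP[/eqP//|->]; rewrite orbT. Qed.

Lemma twin_chain_not_H2 : not_H2 twin_chain.
Proof.
exists (1 : twin_chain), (2 : twin_chain); split; first by [].
split.
  apply: fin_set_sub (fin_set_mem [:: 1 : twin_chain]) => x [le_1x nle_2x].
  by rewrite (twin_up_level _ le_1x nle_2x) ?inE.
apply: fin_set_sub (fin_set_mem [:: 2 : twin_chain]) => x [le_2x nle_1x].
by rewrite (twin_up_level _ le_2x nle_1x) ?inE.
Qed.

Local Open Scope ring_scope.

Definition twin_mobius (x y : twin_chain) : int :=
  if x == y then 1
  else if (level x < level y)%N then (-1) ^+ (level y - level x) else 0.

(* [x, y) consists of x followed by the two elements of each level strictly
   between level x and level y. *)
Definition twin_interval (x y : twin_chain) : seq twin_chain :=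
  x :: iota (2 * level x).+1 (2 * (level y - level x).-1).

Lemma twin_interval_enum (x y : twin_chain) :
  (x < y)%O -> enumerates (twin_interval x y) (fun z => (x <= z < y)%O).
Proof.
rewrite twin_ltE => lt_xy; split.
  rewrite /= iota_uniq andbT mem_iota negb_and -leqNgt.
  by have -> : (x <= 2 * level x)%N by rewrite /level; lia.
move=> z; rewrite inE mem_iota twin_ltE twin_leE.
have [->|nzx] := eqVneq z x; first by rewrite lt_xy.
by rewrite /= /level in lt_xy *; split=> /andP[? ?]; apply/andP; split; lia.
Qed.

Lemma sum_twin_levels (L k : nat) :
  1 + \sum_(z <- iota (2 * L).+1 (2 * k)) (-1) ^+ (level z - L) = (-1) ^+ k :> int.
Proof.
elim: k => [|k IH]; first by rewrite big_nil addr0.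
have -> : (2 * k.+1 = 2 * k + 2)%N by lia.
rewrite iotaD big_cat /= !big_cons big_nil addr0 !addrA IH.
have -> : (level ((2 * L).+1 + 2 * k) - L = k.+1)%N by rewrite /level; lia.
have -> : (level ((2 * L).+1 + 2 * k).+1 - L = k.+1)%N by rewrite /level; lia.
by rewrite exprS mulN1r subrr sub0r.
Qed.

Lemma twin_mobius_rec (x y : twin_chain) : (x < y)%O ->
  twin_mobius x y = - \sum_(z <- twin_interval x y) twin_mobius x z.
Proof.
move=> lt_xy; have := lt_xy; rewrite twin_ltE => lt_lvl.
rewrite big_cons /twin_mobius eqxx (lt_eqF lt_xy) lt_lvl.
rewrite (eq_big_seq (fun z => (-1) ^+ (level z - level x))); last first.
  move=> z; rewrite mem_iota => hz.
  have -> : (x == z) = false by apply/eqP => exz; rewrite exz /level in hz; lia.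
  by have -> : (level x < level z)%N by rewrite /level in hz *; lia.
rewrite sum_twin_levels.
have -> : (level y - level x = (level y - level x).-1.+1)%N by lia.
by rewrite exprS mulN1r.
Qed.

Lemma twin_mobius_is_mobius : is_mobius twin_mobius.
Proof.
split; first by move=> x; rewrite /twin_mobius eqxx.
split.
  move=> x y lt_xy s hs; rewrite (twin_mobius_rec lt_xy).
  by rewrite (perm_big _ (enumerates_perm hs (twin_interval_enum lt_xy))).
by move=> x y; rewrite twin_leE negb_or /twin_mobius => /andP[/negPf-> /negPf->].
Qed.

Lemma twin_mobius_uniq (mu : twin_chain -> twin_chain -> int) :
  is_mobius mu -> forall x y, mu x y = twin_mobius x y.
Proof.
move=> mu_mobius; apply: (is_mobius_uniq twin_chain_locally_finite (rank := level)).
- by move=> x y; rewrite twin_ltE.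
- exact: mu_mobius.
- exact: twin_mobius_is_mobius.
Qed.

Lemma twin_mobius_neq0 (x y : twin_chain) :
  (level x < level y)%N -> twin_mobius x y != 0.
Proof.
move=> lt_xy; rewrite /twin_mobius lt_xy.
by rewrite ifF ?expf_neq0 //; apply: contraTF lt_xy => /eqP->; rewrite ltnn.
Qed.

Lemma twin_mobius_nonvanishing : mobius_nonvanishing twin_mobius.
Proof.
move=> x /fin_set_nat_bounded [m bounded].
pose y : twin_chain := (m + x).+2.
have lt_xy : (level x < level y)%N by rewrite /level /y; lia.
by have := bounded y (twin_mobius_neq0 lt_xy); rewrite /y; lia.
Qed.

Theorem theorem1p6 :
  exists (d : Order.disp_t) (T : porderType d),
    locally_finite T /\ has_minimum T /\
    (exists mu : T -> T -> int, is_mobius mu) /\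
    (forall mu : T -> T -> int, is_mobius mu -> mobius_nonvanishing mu) /\
    not_H2 T /\
    not_mobius_uncertainty T.
Proof.
exists twin_disp, twin_chain.
split; first exact: twin_chain_locally_finite.
split; first exact: twin_chain_has_minimum.
split; first by exists twin_mobius; exact: twin_mobius_is_mobius.
split.
  move=> mu /twin_mobius_uniq mu_eq x fin_mu; apply: (@twin_mobius_nonvanishing x).
  by apply: fin_set_sub fin_mu => y; rewrite mu_eq.
split; first exact: twin_chain_not_H2.
exact: not_H2_not_mobius_uncertainty twin_chain_not_H2.
Qed.
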